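(* Let $(\mathbf{X},Y,\hat Y)$ be random variables on $\mathcal{X}\times\mathcal{Y}\times\mathcal{Y}$ with $P(\hat Y=i\mid Y=j)=p_{i,j}$ for all $i,j\in\{1,\dots,K\}$ (so $\sum_{i=1}^K p_{i,j}=1$ for each $j$), and assume $\hat Y$ is conditionally independent of $\mathbf{X}$ given $Y$ (i.e. $P(\mathbf{X}\mid Y)=P(\mathbf{X}\mid Y,\hat Y)$), so that $P(\hat Y=i\mid\mathbf{X})=\sum_{j=1}^K p_{i,j}P(Y=j\mid\mathbf{X})$. Let $Q$ be any probability distribution on a hypothesis class $\mathcal{H}$ and let $\hat M$ be a random variable such that, conditionally on $\mathbf{X}=\mathbf{x}$, $\hat M$ is discrete and equals $M_Q(\mathbf{x},i)$ with probability $P(\hat Y=i\mid\mathbf{X}=\mathbf{x})$, $i=1,\dots,K$. Let $\mu^{\hat M}_1=\mathbb{E}[\hat M]$, $\mu^{\hat M}_2=\mathbb{E}[\hat M^2]$, and $\beta=\max_{i\in\{1,\dots,K\}}\sum_{j=1}^K p_{i,j}$. If $\mu^{\hat M}_1>0$, then $$R(B_{Q_{\mathrm{opt}}})\le 1-\frac{1}{\beta}\cdot\frac{(\mu^{\hat M}_1)^2}{\mu^{\hat M}_2}.$$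
   Context: $\mathcal{X}\subset\mathbb{R}^d$, $\mathcal{Y}=\{1,\dots,K\}$, $K\ge2$; $\mathcal{H}$ is a class of classifiers $h:\mathcal{X}\to\mathcal{Y}$. For a distribution $Q$ on $\mathcal{H}$: votes $v_Q(\mathbf{x},c)=\mathbb{E}_{h\sim Q}\mathbb{1}[h(\mathbf{x})=c]$, margin $M_Q(\mathbf{x},y)=v_Q(\mathbf{x},y)-\max_{c\ne y}v_Q(\mathbf{x},c)$. $B_{Q_{\mathrm{opt}}}$ denotes the optimal (maximum a posteriori) classifier $B_{Q_{\mathrm{opt}}}(\mathbf{x})=\arg\max_{c\in\mathcal{Y}}P(Y=c\mid\mathbf{X}=\mathbf{x})$, whose risk with respect to the true label is $R(B_{Q_{\mathrm{opt}}})=\mathbb{E}_{\mathbf{X}}\big[1-\max_{j}P(Y=j\mid\mathbf{X})\big]$. $\hat Y$ is an imperfect (noisy) version of the label $Y$. *)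

From Stdlib Require Import Reals List Lra.
Open Scope R_scope.

(* Labels Y = {1..K} are represented as the naturals 0 .. K-1. *)

Definition sumK (K : nat) (f : nat -> R) : R :=
  fold_right (fun i acc => f i + acc) 0 (seq 0 K).

(* Maximum of a list of reals; d is only returned for the empty list. *)
Fixpoint lmax (d : R) (l : list R) : R :=
  match l with
  | nil => d
  | a :: nil => a
  | a :: t => Rmax a (lmax d t)
  end.

(* max over labels i in {0..K-1} of f i (K >= 1 assumed where used) *)
Definition maxK (K : nat) (f : nat -> R) : R := lmax 0 (map f (seq 0 K)).

Definition maxK_neq (K : nat) (y : nat) (f : nat -> R) : R :=
  lmax 0 (map f (filter (fun c => negb (Nat.eqb c y)) (seq 0 K))).

Definition bounded {T : Type} (f : T -> R) : Prop :=
  exists B, forall t, Rabs (f t) <= B.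

(* An expectation operator of a probability distribution on T:
   a normalized, positive linear functional on bounded functions.
   (Every probability measure gives one, by integration of bounded
   measurable functions extended to all bounded functions.) *)
Definition is_expectation {T : Type} (E : (T -> R) -> R) : Prop :=
  (forall f g, bounded f -> bounded g ->
     E (fun t => f t + g t) = E f + E g) /\
  (forall (c : R) f, bounded f -> E (fun t => c * f t) = c * E f) /\
  (forall f, bounded f -> (forall t, 0 <= f t) -> 0 <= E f) /\
  E (fun _ => 1) = 1.

Definition votes {X H : Type} (EQ : (H -> R) -> R) (clf : H -> X -> nat)
  (x : X) (c : nat) : R :=
  EQ (fun h => if Nat.eqb (clf h x) c then 1 else 0).

Definition margin {X H : Type} (K : nat) (EQ : (H -> R) -> R)
  (clf : H -> X -> nat) (x : X) (y : nat) : R :=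
  votes EQ clf x y - maxK_neq K y (votes EQ clf x).

(* P(Yhat = i | X = x) = sum_j p_{i,j} P(Y = j | X = x) *)
Definition eta_hat (K : nat) (p : nat -> nat -> R) {X : Type}
  (eta : X -> nat -> R) (x : X) (i : nat) : R :=
  sumK K (fun j => p i j * eta x j).

(* Risk of the optimal (MAP) classifier: E_X[1 - max_j P(Y=j|X)] *)
Definition risk_opt {X : Type} (K : nat) (EX : (X -> R) -> R)
  (eta : X -> nat -> R) : R :=
  EX (fun x => 1 - maxK K (eta x)).

(* mu_1 = E[Mhat] = E_X[ sum_i P(Yhat=i|X) M_Q(X,i) ] *)
Definition mu1 {X H : Type} (K : nat) (EX : (X -> R) -> R)
  (EQ : (H -> R) -> R) (clf : H -> X -> nat)
  (p : nat -> nat -> R) (eta : X -> nat -> R) : R :=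
  EX (fun x => sumK K (fun i => eta_hat K p eta x i * margin K EQ clf x i)).

(* mu_2 = E[Mhat^2] = E_X[ sum_i P(Yhat=i|X) M_Q(X,i)^2 ] *)
Definition mu2 {X H : Type} (K : nat) (EX : (X -> R) -> R)
  (EQ : (H -> R) -> R) (clf : H -> X -> nat)
  (p : nat -> nat -> R) (eta : X -> nat -> R) : R :=
  EX (fun x => sumK K (fun i => eta_hat K p eta x i * (margin K EQ clf x i) ^ 2)).

Definition beta (K : nat) (p : nat -> nat -> R) : R :=
  maxK K (fun i => sumK K (fun j => p i j)).

From Stdlib Require Import Reals List Lra Lia FunctionalExtensionality Classical.
(* Imported last so that [bounded] denotes [Defs.bounded], not the Stdlib predicate. *)
From Pilot Require Import Defs.
Open Scope R_scope.

(** At each point x at most one label has a positive margin, so the weighted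
    margin sum is at most eta_hat(x, i0) M(x, i0) for that label i0, and
    eta_hat(x, i0) <= beta * max_j P(Y = j | x).  AM-GM with a free parameter
    lam > 0 gives
      mu1 <= lam/2 * mu2 + beta * E[max_j P(Y = j | X)] / (2 lam),
    and optimising lam (a Cauchy-Schwarz inequality in disguise) yields
    mu1^2 <= beta * mu2 * (1 - R(B_opt)). *)

Definition fsum {A : Type} (l : list A) (f : A -> R) : R :=
  fold_right (fun i acc => f i + acc) 0 l.

Lemma sumK_fsum K f : sumK K f = fsum (seq 0 K) f.
Proof. reflexivity. Qed.

Lemma in_seq0 K i : In i (seq 0 K) <-> (i < K)%nat.
Proof. rewrite in_seq; lia. Qed.

Section ListSums.

Context {A : Type}.

Lemma fsum_scal (l : list A) c f : fsum l (fun i => c * f i) = c * fsum l f.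
Proof. induction l; simpl; [lra | rewrite IHl; lra]. Qed.

Lemma fsum_le (l : list A) f g :
  (forall i, In i l -> f i <= g i) -> fsum l f <= fsum l g.
Proof.
  induction l as [|a l IH]; simpl; intros Hfg; [lra|].
  pose proof (Hfg a (or_introl eq_refl)).
  assert (fsum l f <= fsum l g) by (apply IH; auto).
  lra.
Qed.

Lemma fsum_nonneg (l : list A) f : (forall i, In i l -> 0 <= f i) -> 0 <= fsum l f.
Proof.
  induction l as [|a l IH]; simpl; intros Hf; [lra|].
  pose proof (Hf a (or_introl eq_refl)).
  assert (0 <= fsum l f) by (apply IH; auto).
  lra.
Qed.

Lemma fsum_nonpos (l : list A) f : (forall i, In i l -> f i <= 0) -> fsum l f <= 0.
Proof.
  induction l as [|a l IH]; simpl; intros Hf; [lra|].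
  pose proof (Hf a (or_introl eq_refl)).
  assert (fsum l f <= 0) by (apply IH; auto).
  lra.
Qed.

Lemma fsum_term_le (l : list A) f j :
  In j l -> (forall i, In i l -> 0 <= f i) -> f j <= fsum l f.
Proof.
  induction l as [|a l IH]; simpl; intros Hj Hf; [contradiction|].
  pose proof (Hf a (or_introl eq_refl)).
  assert (0 <= fsum l f) by (apply fsum_nonneg; auto).
  destruct Hj as [<- | Hj]; [lra|].
  assert (f j <= fsum l f) by (apply IH; auto).
  lra.
Qed.

Lemma fsum_le_single (l : list A) f i0 :
  NoDup l -> In i0 l -> (forall i, In i l -> i <> i0 -> f i <= 0) ->
  fsum l f <= f i0.
Proof.
  induction l as [|a l IH]; simpl; intros Hnd Hi0 Hf; [contradiction|].
  inversion Hnd as [|? ? Ha Hl]; subst.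
  destruct Hi0 as [<- | Hi0].
  - assert (fsum l f <= 0).
    { apply fsum_nonpos; intros i Hi; apply Hf; [now right|].
      now intros ->. }
    lra.
  - assert (f a <= 0) by (apply Hf; [now left | now intros ->]).
    assert (fsum l f <= f i0) by (apply IH; auto).
    lra.
Qed.

Lemma fsum_abs_le (l : list A) f c :
  (forall i, In i l -> Rabs (f i) <= c i) -> Rabs (fsum l f) <= fsum l c.
Proof.
  induction l as [|a l IH]; simpl; intros Hf.
  - rewrite Rabs_R0; lra.
  - pose proof (Hf a (or_introl eq_refl)).
    assert (Rabs (fsum l f) <= fsum l c) by (apply IH; auto).
    pose proof (Rabs_triang (f a) (fsum l f)).
    lra.
Qed.

End ListSums.

Lemma lmax_ge d l a : In a l -> a <= lmax d l.
Proof.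
  induction l as [|b t IH]; simpl; intros Ha; [contradiction|].
  destruct t as [|c t'].
  - destruct Ha as [<- | []]; lra.
  - destruct Ha as [<- | Ha]; [apply Rmax_l|].
    eapply Rle_trans; [apply IH, Ha | apply Rmax_r].
Qed.

Lemma lmax_le d l c : d <= c -> (forall a, In a l -> a <= c) -> lmax d l <= c.
Proof.
  induction l as [|b t IH]; simpl; intros Hd Hl; [exact Hd|].
  destruct t as [|x t']; [apply Hl; auto|].
  apply Rmax_lub; [apply Hl | apply IH]; auto.
Qed.

Lemma lmax_ge_lb d l c : c <= d -> (forall a, In a l -> c <= a) -> c <= lmax d l.
Proof.
  induction l as [|b t IH]; simpl; intros Hd Hl; [exact Hd|].
  destruct t as [|x t']; [apply Hl; auto|].
  eapply Rle_trans; [apply Hl; auto | apply Rmax_l].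
Qed.

Lemma maxK_ge K f i : (i < K)%nat -> f i <= maxK K f.
Proof. intros Hi; apply lmax_ge, in_map, in_seq0, Hi. Qed.

Lemma maxK_le K f c : 0 <= c -> (forall i, (i < K)%nat -> f i <= c) -> maxK K f <= c.
Proof.
  intros Hc Hf; apply lmax_le; [exact Hc|].
  intros a Ha; apply in_map_iff in Ha as [i [<- Hi]]; apply Hf, in_seq0, Hi.
Qed.

Lemma maxK_neq_ge K y f i : (i < K)%nat -> i <> y -> f i <= maxK_neq K y f.
Proof.
  intros Hi Hiy; apply lmax_ge, in_map, filter_In; split; [apply in_seq0, Hi|].
  apply Nat.eqb_neq in Hiy; rewrite Hiy; reflexivity.
Qed.

Lemma maxK_neq_bounds K y f :
  (forall i, 0 <= f i <= 1) -> 0 <= maxK_neq K y f <= 1.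
Proof.
  intros Hf; split; [apply lmax_ge_lb | apply lmax_le]; try lra;
    intros a Ha; apply in_map_iff in Ha as [i [<- _]]; apply Hf.
Qed.

Lemma bounded_plus {T} (f g : T -> R) :
  bounded f -> bounded g -> bounded (fun t => f t + g t).
Proof.
  intros [a Ha] [b Hb]; exists (a + b); intro t.
  pose proof (Rabs_triang (f t) (g t)); pose proof (Ha t); pose proof (Hb t).
  lra.
Qed.

Lemma bounded_scal {T} c (f : T -> R) : bounded f -> bounded (fun t => c * f t).
Proof.
  intros [a Ha]; exists (Rabs c * a); intro t; rewrite Rabs_mult.
  apply Rmult_le_compat_l; [apply Rabs_pos | apply Ha].
Qed.

Lemma bounded_const {T} (c : R) : bounded (fun _ : T => c).
Proof. exists (Rabs c); intros; lra. Qed.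

Lemma bounded_weighted_sum {T A} (l : list A) (w g : T -> A -> R) (c : A -> R) :
  (forall t i, In i l -> 0 <= w t i <= c i) ->
  (forall t i, In i l -> Rabs (g t i) <= 1) ->
  bounded (fun t => fsum l (fun i => w t i * g t i)).
Proof.
  intros Hw Hg; exists (fsum l c); intro t; apply fsum_abs_le; intros i Hi.
  specialize (Hw t i Hi); specialize (Hg t i Hi).
  rewrite Rabs_mult, (Rabs_right (w t i)) by lra.
  pose proof (Rabs_pos (g t i)).
  nra.
Qed.

Section Expectation.

Context {T : Type} (E : (T -> R) -> R) (HE : is_expectation E).

Lemma E_nonneg f : bounded f -> (forall t, 0 <= f t) -> 0 <= E f.
Proof. apply HE. Qed.

Lemma E_lin2 a b f g : bounded f -> bounded g ->
  E (fun t => a * f t + b * g t) = a * E f + b * E g.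
Proof.
  destruct HE as [Hadd [Hscal _]]; intros Hf Hg.
  rewrite (Hadd (fun t => a * f t) (fun t => b * g t)) by (apply bounded_scal; auto).
  rewrite !Hscal; auto.
Qed.

Lemma E_le f g : bounded f -> bounded g -> (forall t, f t <= g t) -> E f <= E g.
Proof.
  intros Hf Hg Hfg.
  assert (Hdiff : E (fun t => 1 * g t + (-1) * f t) = E g - E f)
    by (rewrite E_lin2; auto; ring).
  assert (0 <= E (fun t => 1 * g t + (-1) * f t)).
  { apply E_nonneg; [apply bounded_plus; apply bounded_scal; auto|].
    intro t; specialize (Hfg t); lra. }
  lra.
Qed.

Lemma E_one_sub f : bounded f -> E (fun t => 1 - f t) = 1 - E f.
Proof.
  intros Hf; destruct HE as [_ [_ [_ E1]]].
  replace (fun t => 1 - f t) with (fun t => 1 * (fun _ => 1) t + (-1) * f t)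
    by (extensionality t; ring).
  rewrite E_lin2, E1; [ring | apply bounded_const | exact Hf].
Qed.

End Expectation.

Lemma votes_bounds {X H} (EQ : (H -> R) -> R) clf (x : X) c :
  is_expectation EQ -> 0 <= votes EQ clf x c <= 1.
Proof.
  intros HEQ; unfold votes.
  set (ind := fun h => if Nat.eqb (clf h x) c then 1 else 0).
  assert (Hind : forall h, 0 <= ind h <= 1) by (intro h; unfold ind; destruct Nat.eqb; lra).
  assert (Hb : bounded ind) by (exists 1; intro h; apply Rabs_le; specialize (Hind h); lra).
  split.
  - apply E_nonneg; auto; apply Hind.
  - pose proof HEQ as [_ [_ [_ E1]]]; rewrite <- E1.
    apply E_le; [exact HEQ | exact Hb | apply bounded_const | apply Hind].
Qed.

Lemma margin_abs_le1 {X H} K (EQ : (H -> R) -> R) clf (x : X) i :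
  is_expectation EQ -> Rabs (margin K EQ clf x i) <= 1.
Proof.
  intros HEQ; unfold margin.
  pose proof (votes_bounds EQ clf x i HEQ).
  pose proof (maxK_neq_bounds K i (votes EQ clf x)
                (fun c => votes_bounds EQ clf x c HEQ)).
  apply Rabs_le; lra.
Qed.

Lemma margin_pos_unique {X H} K (EQ : (H -> R) -> R) clf (x : X) i j :
  (i < K)%nat -> (j < K)%nat -> i <> j ->
  0 < margin K EQ clf x i -> margin K EQ clf x j <= 0.
Proof.
  intros Hi Hj Hij; unfold margin.
  pose proof (maxK_neq_ge K i (votes EQ clf x) j Hj (not_eq_sym Hij)).
  pose proof (maxK_neq_ge K j (votes EQ clf x) i Hi Hij).
  lra.
Qed.

Lemma abs_sq_le1 r : Rabs r <= 1 -> Rabs (r ^ 2) <= 1.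
Proof.
  intros Hr; rewrite <- RPow_abs; pose proof (Rabs_pos r).
  replace (Rabs r ^ 2) with (Rabs r * Rabs r) by ring.
  nra.
Qed.

Lemma amgm_weighted w m lam :
  0 <= w -> 0 < lam -> w * m <= lam / 2 * (w * m ^ 2) + w / (2 * lam).
Proof.
  intros Hw Hlam.
  assert (0 <= w * (lam * m - 1) ^ 2 / (2 * lam)).
  { apply Rmult_le_pos; [apply Rmult_le_pos; [exact Hw | apply pow2_ge_0]|].
    apply Rlt_le, Rinv_0_lt_compat; lra. }
  assert (lam / 2 * (w * m ^ 2) + w / (2 * lam) - w * m
          = w * (lam * m - 1) ^ 2 / (2 * lam)) by (field; lra).
  lra.
Qed.

(* If at most one of the values [m i] is positive, only its term survives
   the weighted sum, and AM-GM is applied to that term alone. *)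
Lemma weighted_sum_amgm {A} (l : list A) (w m : A -> R) (c lam : R) :
  NoDup l -> 0 < lam -> 0 <= c ->
  (forall i, In i l -> 0 <= w i) ->
  (forall i, In i l -> 0 < m i -> w i <= c) ->
  (forall i j, In i l -> In j l -> i <> j -> 0 < m i -> m j <= 0) ->
  fsum l (fun i => w i * m i) <= lam / 2 * fsum l (fun i => w i * m i ^ 2) + c / (2 * lam).
Proof.
  intros Hnd Hlam Hc Hw Hwc Huniq.
  assert (Hsq : 0 <= fsum l (fun i => w i * m i ^ 2)).
  { apply fsum_nonneg; intros i Hi; apply Rmult_le_pos; [auto | apply pow2_ge_0]. }
  assert (Hc2 : 0 <= c / (2 * lam))
    by (apply Rmult_le_pos; [exact Hc | apply Rlt_le, Rinv_0_lt_compat; lra]).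
  destruct (classic (exists i0, In i0 l /\ 0 < m i0)) as [[i0 [Hi0 Hpos]] | Hnone].
  - assert (Hsingle : fsum l (fun i => w i * m i) <= w i0 * m i0).
    { apply fsum_le_single with (f := fun i => w i * m i); auto.
      intros i Hi Hne; pose proof (Huniq i0 i Hi0 Hi (not_eq_sym Hne) Hpos).
      pose proof (Hw i Hi); nra. }
    assert (Hterm : w i0 * m i0 ^ 2 <= fsum l (fun i => w i * m i ^ 2)).
    { apply fsum_term_le with (f := fun i => w i * m i ^ 2); auto.
      intros i Hi; apply Rmult_le_pos; [auto | apply pow2_ge_0]. }
    pose proof (amgm_weighted (w i0) (m i0) lam (Hw i0 Hi0) Hlam).
    assert (w i0 / (2 * lam) <= c / (2 * lam)).
    { apply Rmult_le_compat_r; [apply Rlt_le, Rinv_0_lt_compat; lra | auto]. }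
    nra.
  - assert (fsum l (fun i => w i * m i) <= 0).
    { apply fsum_nonpos; intros i Hi.
      assert (m i <= 0) by (apply Rnot_lt_le; intro; apply Hnone; eauto).
      pose proof (Hw i Hi); nra. }
    nra.
Qed.

(* Minimising the right-hand side over [lam]: a Cauchy-Schwarz bound. *)
Lemma sq_le_of_amgm a b c :
  0 < a -> 0 <= b -> 0 <= c ->
  (forall lam, 0 < lam -> a <= lam / 2 * b + c / (2 * lam)) -> a ^ 2 <= b * c.
Proof.
  intros Ha Hb Hc Hall.
  destruct (Rle_lt_or_eq_dec 0 b Hb) as [Hbpos | <-].
  - specialize (Hall (a / b) ltac:(apply Rdiv_lt_0_compat; lra)).
    replace (a / b / 2 * b + c / (2 * (a / b))) with ((a ^ 2 + b * c) / (2 * a))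
      in Hall by (field; lra).
    apply Rmult_le_compat_r with (r := 2 * a) in Hall; [|lra].
    unfold Rdiv in Hall; rewrite Rmult_assoc, Rinv_l in Hall by lra.
    nra.
  - exfalso.
    specialize (Hall ((c + 1) / a) ltac:(apply Rdiv_lt_0_compat; lra)).
    replace ((c + 1) / a / 2 * 0 + c / (2 * ((c + 1) / a))) with
      (a * (c / (2 * (c + 1)))) in Hall by (field; lra).
    assert (c / (2 * (c + 1)) < 1).
    { apply (Rmult_lt_reg_r (2 * (c + 1))); [lra|].
      unfold Rdiv; rewrite Rmult_assoc, Rinv_l by lra; lra. }
    nra.
Qed.

Lemma ratio_le_of_sq_le a b c e :
  0 < a -> 0 <= b -> 0 <= c -> a ^ 2 <= b * (c * e) -> 1 / c * (a ^ 2 / b) <= e.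
Proof.
  intros Ha Hb Hc Hle.
  assert (Hbce : 0 < b * (c * e)) by nra.
  assert (0 < b) by (destruct (Rle_lt_or_eq_dec 0 b Hb) as [|<-]; nra).
  assert (0 < c) by (destruct (Rle_lt_or_eq_dec 0 c Hc) as [|<-]; nra).
  replace (1 / c * (a ^ 2 / b)) with (a ^ 2 / (b * c)) by (field; lra).
  apply (Rmult_le_reg_r (b * c)); [nra|].
  unfold Rdiv; rewrite Rmult_assoc, Rinv_l by nra.
  nra.
Qed.

Section NoisyLabels.

Context {X H : Type} (K : nat) (EQ : (H -> R) -> R) (clf : H -> X -> nat)
  (eta : X -> nat -> R) (p : nat -> nat -> R).
Hypothesis HK : (0 < K)%nat.
Hypothesis HEQ : is_expectation EQ.
Hypothesis Heta_nonneg : forall x j, (j < K)%nat -> 0 <= eta x j.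
Hypothesis Heta_sum : forall x, sumK K (eta x) = 1.
Hypothesis Hp_nonneg : forall i j, (i < K)%nat -> (j < K)%nat -> 0 <= p i j.

Lemma eta_le1 x j : (j < K)%nat -> eta x j <= 1.
Proof.
  intros Hj; rewrite <- (Heta_sum x), sumK_fsum.
  apply fsum_term_le; [apply in_seq0, Hj|].
  intros i Hi; apply Heta_nonneg, in_seq0, Hi.
Qed.

Lemma maxK_eta_bounds x : 0 <= maxK K (eta x) <= 1.
Proof.
  split.
  - eapply Rle_trans; [apply (Heta_nonneg x 0 HK) | apply maxK_ge, HK].
  - apply maxK_le; [lra | apply eta_le1].
Qed.

Lemma row_sum_nonneg i : (i < K)%nat -> 0 <= sumK K (fun j => p i j).
Proof. intros Hi; apply fsum_nonneg; intros j Hj; apply Hp_nonneg, in_seq0; auto. Qed.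

Lemma beta_nonneg : 0 <= beta K p.
Proof.
  eapply Rle_trans; [apply (row_sum_nonneg 0 HK)|].
  apply (maxK_ge K (fun i => sumK K (fun j => p i j))), HK.
Qed.

Lemma eta_hat_nonneg x i : (i < K)%nat -> 0 <= eta_hat K p eta x i.
Proof.
  intros Hi; apply fsum_nonneg; intros j Hj; apply in_seq0 in Hj.
  apply Rmult_le_pos; auto.
Qed.

Lemma eta_hat_le_row_sum x i : (i < K)%nat -> eta_hat K p eta x i <= sumK K (fun j => p i j).
Proof.
  intros Hi; apply fsum_le; intros j Hj; apply in_seq0 in Hj.
  pose proof (eta_le1 x j Hj); pose proof (Heta_nonneg x j Hj).
  pose proof (Hp_nonneg i j Hi Hj); nra.
Qed.

Lemma eta_hat_le_beta_max x i :
  (i < K)%nat -> eta_hat K p eta x i <= beta K p * maxK K (eta x).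
Proof.
  intros Hi.
  assert (Hmax : eta_hat K p eta x i <= sumK K (fun j => p i j) * maxK K (eta x)).
  { unfold eta_hat; rewrite !sumK_fsum, Rmult_comm, <- fsum_scal.
    apply fsum_le; intros j Hj; apply in_seq0 in Hj.
    rewrite (Rmult_comm (maxK _ _)); apply Rmult_le_compat_l; [auto|].
    apply maxK_ge, Hj. }
  assert (Hrow : sumK K (fun j => p i j) <= beta K p)
    by apply (maxK_ge K (fun i => sumK K (fun j => p i j)) i Hi).
  pose proof (maxK_eta_bounds x); pose proof (row_sum_nonneg i Hi).
  nra.
Qed.

Lemma weighted_margin_bounded (g : R -> R) :
  (forall r, Rabs r <= 1 -> Rabs (g r) <= 1) ->
  bounded (fun x => sumK K (fun i => eta_hat K p eta x i * g (margin K EQ clf x i))).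
Proof.
  intros Hg.
  apply bounded_weighted_sum with (c := fun i => sumK K (fun j => p i j)).
  - intros x i Hi; apply in_seq0 in Hi.
    split; [apply eta_hat_nonneg | apply eta_hat_le_row_sum]; auto.
  - intros x i _; apply Hg, margin_abs_le1, HEQ.
Qed.

Lemma weighted_margin_amgm x lam : 0 < lam ->
  sumK K (fun i => eta_hat K p eta x i * margin K EQ clf x i) <=
  lam / 2 * sumK K (fun i => eta_hat K p eta x i * margin K EQ clf x i ^ 2)
  + beta K p / (2 * lam) * maxK K (eta x).
Proof.
  intros Hlam.
  replace (beta K p / (2 * lam) * maxK K (eta x))
    with (beta K p * maxK K (eta x) / (2 * lam)) by (field; lra).
  pose proof beta_nonneg; pose proof (maxK_eta_bounds x).
  rewrite !sumK_fsum.
  apply weighted_sum_amgm; [apply seq_NoDup | exact Hlam | nra | | |].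
  - intros i Hi; apply eta_hat_nonneg, in_seq0, Hi.
  - intros i Hi _; apply eta_hat_le_beta_max, in_seq0, Hi.
  - intros i j Hi Hj; rewrite !in_seq0 in *; apply margin_pos_unique; auto.
Qed.

Section Integrated.

Context (EX : (X -> R) -> R) (HEX : is_expectation EX).

Lemma maxK_eta_bounded : bounded (fun x => maxK K (eta x)).
Proof. exists 1; intro x; apply Rabs_le; pose proof (maxK_eta_bounds x); lra. Qed.

Lemma mu2_nonneg : 0 <= mu2 K EX EQ clf p eta.
Proof.
  apply (E_nonneg EX HEX); [exact (weighted_margin_bounded (fun r => r ^ 2) abs_sq_le1)|].
  intro x; apply fsum_nonneg; intros i Hi; apply in_seq0 in Hi.
  apply Rmult_le_pos; [apply eta_hat_nonneg, Hi | apply pow2_ge_0].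
Qed.

Lemma mu1_sq_le : 0 < mu1 K EX EQ clf p eta ->
  mu1 K EX EQ clf p eta ^ 2 <=
  mu2 K EX EQ clf p eta * (beta K p * EX (fun x => maxK K (eta x))).
Proof.
  intros Hmu1.
  pose proof beta_nonneg.
  assert (0 <= EX (fun x => maxK K (eta x)))
    by (apply (E_nonneg EX HEX); [exact maxK_eta_bounded | apply maxK_eta_bounds]).
  apply sq_le_of_amgm; [exact Hmu1 | exact mu2_nonneg | nra |].
  intros lam Hlam.
  replace (beta K p * EX (fun x => maxK K (eta x)) / (2 * lam))
    with (beta K p / (2 * lam) * EX (fun x => maxK K (eta x))) by (field; lra).
  unfold mu1, mu2; rewrite <- E_lin2;
    [| exact HEX | exact (weighted_margin_bounded (fun r => r ^ 2) abs_sq_le1)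
     | exact maxK_eta_bounded].
  apply (E_le EX HEX).
  - exact (weighted_margin_bounded (fun r => r) (fun r Hr => Hr)).
  - apply bounded_plus; apply bounded_scal;
      [exact (weighted_margin_bounded (fun r => r ^ 2) abs_sq_le1) | exact maxK_eta_bounded].
  - intro x; apply weighted_margin_amgm, Hlam.
Qed.

End Integrated.

End NoisyLabels.

Theorem proposition1
  (X H : Type) (K : nat) (HK : (2 <= K)%nat)
  (EX : (X -> R) -> R) (HEX : is_expectation EX)
  (EQ : (H -> R) -> R) (HEQ : is_expectation EQ)
  (clf : H -> X -> nat) (Hclf : forall h x, (clf h x < K)%nat)
  (eta : X -> nat -> R)
  (Heta_nonneg : forall x j, (j < K)%nat -> 0 <= eta x j)
  (Heta_sum : forall x, sumK K (eta x) = 1)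
  (p : nat -> nat -> R)
  (Hp_nonneg : forall i j, (i < K)%nat -> (j < K)%nat -> 0 <= p i j)
  (Hp_sum : forall j, (j < K)%nat -> sumK K (fun i => p i j) = 1)
  (Hmu1 : 0 < mu1 K EX EQ clf p eta) :
  risk_opt K EX eta
    <= 1 - (1 / beta K p) * ((mu1 K EX EQ clf p eta) ^ 2 / mu2 K EX EQ clf p eta).
Proof.
  assert (HK0 : (0 < K)%nat) by lia.
  unfold risk_opt; rewrite E_one_sub; [| exact HEX | apply maxK_eta_bounded; auto].
  enough (1 / beta K p * (mu1 K EX EQ clf p eta ^ 2 / mu2 K EX EQ clf p eta)
          <= EX (fun x => maxK K (eta x))) by lra.
  apply ratio_le_of_sq_le; [exact Hmu1 | apply mu2_nonneg | apply beta_nonneg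
                            | apply mu1_sq_le]; auto.
Qed.
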